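(* Let $k>0$ and fix $\Delta\in\mathbb{N}$. For every integer $n$ with $-\Delta\le n\le -1$, except when $\{n,n+\Delta\}=\{-1,0\}$, there is a curve $\tau\mapsto\gamma_c(\tau)$, $\tau\in(0,1/2]$, of real numbers such that $\Omega_{n,\gamma_c(\tau),\tau}=\Omega_{n+\Delta,\gamma_c(\tau),\tau}$ (the eigenvalues $i\Omega_{n,\gamma,\tau}$ and $i\Omega_{n+\Delta,\gamma,\tau}$ of $\mathcal H_0(\gamma,\tau)$ collide). All such collisions take place away from the origin, except when $\Delta$ is odd and $n=-(\Delta+1)/2$, in which case $n+\Delta=-n-1$ and the eigenvalues $i\Omega_{n,\gamma,\tau}$ and $i\Omega_{-n-1,\gamma,\tau}$ collide at the origin for $\tau=1/2$, $\gamma=\gamma_c(1/2)$.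
   Context: For $k>0$, $\gamma\in\mathbb{R}$, $\tau\in(-1/2,1/2]\setminus\{0\}$ and $n\in\mathbb{Z}$, set $\Omega_{n,\gamma,\tau}=k^3(n+\tau)\big(1-(n+\tau)^2\big)+\frac{3\gamma^2}{k(n+\tau)}$. These satisfy $\mathcal H_0(\gamma,\tau)e^{inz}=i\Omega_{n,\gamma,\tau}e^{inz}$, where $\mathcal H_0(\gamma,\tau)=k^3(\partial_z+i\tau)+k^3(\partial_z+i\tau)^3-\frac{3\gamma^2}{k}(\partial_z+i\tau)^{-1}$ on $2\pi$-periodic square-integrable functions (the zero-amplitude Floquet-Bloch linearized Konopelchenko–Dubrovsky operator), whose spectrum is $\{i\Omega_{n,\gamma,\tau}:n\in\mathbb{Z}\}$. Two eigenvalues ''collide'' at $\gamma_c$ if $\Omega_{n,\gamma_c,\tau}=\Omega_{m,\gamma_c,\tau}$ for $n\ne m$. *)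

From Stdlib Require Export Reals Lra Lia ZArith.
Open Scope R_scope.

Definition Omega (k : R) (n : Z) (gamma tau : R) : R :=
  let p := IZR n + tau in
  k ^ 3 * p * (1 - p ^ 2) + 3 * gamma ^ 2 / (k * p).

Definition tau_range (t : R) : Prop := 0 < t <= 1 / 2.

(** Writing [P = n + tau] and [Q = n + Delta + tau], the difference
    [Omega_P - Omega_Q] factors as [(P - Q) (k^4 P Q (1 - P^2 - P Q - Q^2) - 3 gamma^2) / (k P Q)],
    so the eigenvalues collide exactly when [3 gamma^2 = k^4 P Q (1 - P^2 - P Q - Q^2)].
    For [-Delta <= n <= -1] (outside the excluded pair) and [tau] in [(0, 1/2]] one has
    [P < 0 < Q] and [P^2 + P Q + Q^2 >= 1], so the right-hand side is nonnegative and
    [gamma_c] is its (continuous) square root.  At a collision the common value is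
    [k^3 (P + Q) (1 - P^2 - Q^2)] with [P^2 + Q^2 > 1], which vanishes only when
    [P + Q = 2n + Delta + 2 tau = 0], i.e. [2n + Delta = -1] and [tau = 1/2]. *)

From Stdlib Require Import Reals ZArith Lra Lia Psatz.
Open Scope R_scope.

Definition omega (k p g : R) : R := k ^ 3 * p * (1 - p ^ 2) + 3 * g ^ 2 / (k * p).

Definition collision_rhs (k P Q : R) : R := k ^ 4 * P * Q * (1 - (P ^ 2 + P * Q + Q ^ 2)).

Definition collision_gamma (k P Q : R) : R := sqrt (collision_rhs k P Q / 3).

Lemma Omega_omega (k : R) (n : Z) (g t : R) : Omega k n g t = omega k (IZR n + t) g.
Proof. reflexivity. Qed.

Lemma omega_sub (k P Q g : R) : k <> 0 -> P <> 0 -> Q <> 0 ->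
  omega k P g - omega k Q g = (P - Q) * (collision_rhs k P Q - 3 * g ^ 2) / (k * P * Q).
Proof. intros. unfold omega, collision_rhs. field. auto. Qed.

Lemma omega_eq_iff (k P Q g : R) : k <> 0 -> P <> 0 -> Q <> 0 -> P <> Q ->
  omega k P g = omega k Q g <-> 3 * g ^ 2 = collision_rhs k P Q.
Proof.
  intros hk hP hQ hPQ.
  assert (hkPQ : k * P * Q <> 0) by (repeat apply Rmult_integral_contrapositive_currified; auto).
  split; intro H.
  - assert (Hsub := omega_sub k P Q g hk hP hQ). rewrite H, Rminus_diag in Hsub.
    symmetry in Hsub. unfold Rdiv in Hsub.
    apply Rmult_integral in Hsub as [Hsub|Hsub]; [|now apply Rinv_neq_0_compat in hkPQ].
    apply Rmult_integral in Hsub as [Hsub|Hsub]; lra.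
  - apply Rminus_diag_uniq. rewrite omega_sub, H by auto. field. auto.
Qed.

Lemma omega_collision_value_l (k P Q g : R) : k <> 0 -> P <> 0 ->
  3 * g ^ 2 = collision_rhs k P Q ->
  omega k P g = k ^ 3 * (P + Q) * (1 - P ^ 2 - Q ^ 2).
Proof. intros hk hP H. unfold omega. rewrite H. unfold collision_rhs. field. auto. Qed.

Lemma collision_rhs_sym (k P Q : R) : collision_rhs k P Q = collision_rhs k Q P.
Proof. unfold collision_rhs. ring. Qed.

Lemma omega_collision_value (k P Q g : R) : k <> 0 -> P <> 0 -> Q <> 0 ->
  3 * g ^ 2 = collision_rhs k P Q ->
  omega k P g = k ^ 3 * (P + Q) * (1 - P ^ 2 - Q ^ 2) /\
  omega k Q g = k ^ 3 * (P + Q) * (1 - P ^ 2 - Q ^ 2).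
Proof.
  intros hk hP hQ H. split.
  - now apply omega_collision_value_l.
  - rewrite collision_rhs_sym in H. rewrite (omega_collision_value_l k Q P) by auto. ring.
Qed.

Lemma collision_rhs_nonneg (k P Q : R) : P < 0 < Q -> 1 <= P ^ 2 + P * Q + Q ^ 2 ->
  0 <= collision_rhs k P Q.
Proof.
  intros hPQ hS. unfold collision_rhs.
  assert (0 <= k ^ 4) by (replace (k ^ 4) with ((k ^ 2) ^ 2) by ring; apply pow2_ge_0).
  assert (0 <= - (P * Q)) by nra.
  replace (k ^ 4 * P * Q * (1 - (P ^ 2 + P * Q + Q ^ 2)))
    with (k ^ 4 * (- (P * Q)) * (P ^ 2 + P * Q + Q ^ 2 - 1)) by ring.
  apply Rmult_le_pos; [apply Rmult_le_pos|]; lra.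
Qed.

Lemma sqr_collision_gamma (k P Q : R) : 0 <= collision_rhs k P Q ->
  3 * collision_gamma k P Q ^ 2 = collision_rhs k P Q.
Proof.
  intro H. unfold collision_gamma. rewrite <- Rsqr_pow2, Rsqr_sqrt by lra. field.
Qed.

Lemma continuity_pt_collision_gamma (k a b t : R) : 0 <= collision_rhs k (a + t) (b + t) ->
  continuity_pt (fun s => collision_gamma k (a + s) (b + s)) t.
Proof.
  intro H. unfold collision_gamma.
  apply (continuity_pt_comp (fun s => collision_rhs k (a + s) (b + s) / 3) sqrt).
  - unfold collision_rhs. reg.
  - apply continuity_pt_sqrt. lra.
Qed.

Lemma limit1_in_continuity_pt (f : R -> R) (D : R -> Prop) (x : R) :
  continuity_pt f x -> limit1_in f D (f x) x.
Proof.
  intros Hf eps heps. destruct (Hf eps heps) as [alp [halp Hal]].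
  exists alp. split; [exact halp|]. intros y [_ hy].
  destruct (Req_dec y x) as [->|hyx].
  - simpl. unfold R_dist. rewrite Rminus_diag, Rabs_R0. lra.
  - apply Hal. repeat split; auto.
Qed.

Lemma collision_window (n : Z) (Delta : nat) (t : R) :
  (- Z.of_nat Delta <= n <= -1)%Z ->
  ~ ((n = -1 /\ n + Z.of_nat Delta = 0) \/ (n = 0 /\ n + Z.of_nat Delta = -1))%Z ->
  tau_range t ->
  let P := IZR n + t in let Q := IZR (n + Z.of_nat Delta) + t in
  P < 0 < Q /\ 1 <= P ^ 2 + P * Q + Q ^ 2 /\ 1 < P ^ 2 + Q ^ 2.
Proof.
  intros hn hex [t0 t1] P Q.
  assert (hm : 0 <= IZR (n + Z.of_nat Delta)) by (apply IZR_le; lia).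
  assert (hS : P ^ 2 + P * Q + Q ^ 2 = (Q + P / 2) ^ 2 + 3 / 4 * P ^ 2) by field.
  assert (0 <= (Q + P / 2) ^ 2) by apply pow2_ge_0.
  destruct (Z.eq_dec n (-1)) as [e|e].
  - (* the excluded pair forces [n + Delta >= 1] here *)
    assert (hm1 : 1 <= IZR (n + Z.of_nat Delta)) by (apply IZR_le; lia).
    unfold P, Q in *. rewrite e in *. repeat split; nra.
  - assert (hn2 : IZR n <= -2) by (apply IZR_le; lia).
    unfold P, Q in *. repeat split; nra.
Qed.

Lemma tau_sum_eq0 (a b : Z) (t : R) : tau_range t -> IZR a + t + (IZR b + t) = 0 ->
  (a + b = -1)%Z /\ t = 1 / 2.
Proof.
  intros [t0 t1] H.
  assert (Hab : IZR (a + b) = - 2 * t) by (rewrite plus_IZR; lra).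
  assert (hlo : (-1 <= a + b)%Z) by (apply le_IZR; lra).
  assert (hhi : (a + b < 0)%Z) by (apply lt_IZR; lra).
  assert (e : (a + b = -1)%Z) by lia.
  rewrite e in Hab. split; [exact e|lra].
Qed.

Theorem lemma3p2 (k : R) (Delta : nat) (n : Z) :
  0 < k ->
  (- Z.of_nat Delta <= n <= -1)%Z ->
  ~ ((n = -1 /\ n + Z.of_nat Delta = 0) \/ (n = 0 /\ n + Z.of_nat Delta = -1))%Z ->
  exists gc : R -> R,
    (* gc is a curve (continuous on (0,1/2]) *)
    (forall t, tau_range t -> limit1_in gc tau_range (gc t) t) /\
    (* along it, the eigenvalues i Omega_n and i Omega_{n+Delta} collide *)
    (forall t, tau_range t ->
       Omega k n (gc t) t = Omega k (n + Z.of_nat Delta) (gc t) t) /\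
    (* every collision happens away from the origin, except in the odd case at tau = 1/2 *)
    (forall g t, tau_range t ->
       Omega k n g t = Omega k (n + Z.of_nat Delta) g t ->
       Omega k n g t <> 0 \/
       (Nat.Odd Delta /\ (2 * n = - (Z.of_nat Delta + 1))%Z /\ t = 1 / 2)) /\
    (* in the odd case the collision at tau = 1/2, gamma = gc(1/2) is at the origin *)
    (Nat.Odd Delta -> (2 * n = - (Z.of_nat Delta + 1))%Z ->
       Omega k n (gc (1 / 2)) (1 / 2) = 0 /\
       Omega k (n + Z.of_nat Delta) (gc (1 / 2)) (1 / 2) = 0).
Proof.
  intros hk hn hex.
  assert (Hwin := fun t => collision_window n Delta t hn hex). cbv zeta in Hwin.
  set (m := (n + Z.of_nat Delta)%Z) in Hwin |- *.
  assert (Hrhs : forall t, tau_range t -> 0 <= collision_rhs k (IZR n + t) (IZR m + t)).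
  { intros t ht. destruct (Hwin t ht) as (hPQ & hS & _). now apply collision_rhs_nonneg. }
  set (gc := fun t => collision_gamma k (IZR n + t) (IZR m + t)).
  exists gc.
  split; [|split; [|split]].
  - intros t ht. apply limit1_in_continuity_pt, continuity_pt_collision_gamma, Hrhs, ht.
  - intros t ht. destruct (Hwin t ht) as (hPQ & _ & _).
    rewrite !Omega_omega. apply omega_eq_iff; try lra. now apply sqr_collision_gamma, Hrhs.
  - intros g t ht Hc. rewrite !Omega_omega in *. destruct (Hwin t ht) as (hPQ & _ & hP2Q2).
    apply omega_eq_iff in Hc; try lra.
    destruct (omega_collision_value k (IZR n + t) (IZR m + t) g ltac:(lra) ltac:(lra) ltac:(lra) Hc) as [-> _].
    destruct (Req_dec (IZR n + t + (IZR m + t)) 0) as [e|e].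
    + right. destruct (tau_sum_eq0 n m t ht e) as [hnm ->]. unfold m in hnm.
      split; [|split; [lia|reflexivity]].
      destruct (Nat.Even_or_Odd Delta) as [[j hj]|ho]; [lia|exact ho].
    + left. assert (0 < k ^ 3) by (apply pow_lt; lra).
      apply Rmult_integral_contrapositive_currified; [|lra].
      apply Rmult_integral_contrapositive_currified; lra.
  - intros _ h2n. assert (ht : tau_range (1 / 2)) by (unfold tau_range; lra).
    destruct (Hwin _ ht) as (hPQ & _ & _).
    assert (hsum : IZR n + 1 / 2 + (IZR m + 1 / 2) = 0).
    { unfold m. rewrite plus_IZR. apply (f_equal IZR) in h2n.
      rewrite mult_IZR, opp_IZR, plus_IZR in h2n. lra. }
    rewrite !Omega_omega.
    destruct (omega_collision_value k (IZR n + 1 / 2) (IZR m + 1 / 2) (gc (1 / 2))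
                ltac:(lra) ltac:(lra) ltac:(lra) (sqr_collision_gamma _ _ _ (Hrhs _ ht))) as [-> ->].
    rewrite hsum. split; ring.
Qed.
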